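(* For every integer $n>1$, the aura $\mathbb{R}_+^{[n]}$ is archimedean but does not have tempered growth.
   Context: A halo is a commutative unital semiring with a partial order compatible with $+$ and $\cdot$; an aura is a halo whose semiring is a semifield; positive means $0<1$. For positive auras $R_1,\dots,R_n$, the lexicographic product $[\prod]R_i$ is the set $\{0\}\cup\prod_i R_i^\times$ (where $R_i^\times=R_i\setminus\{0\}$ and $0$ is identified with $(0,\dots,0)$), with componentwise addition and multiplication and the lexicographic order (first coordinate most significant); $\mathbb{R}_+^{[n]}$ denotes the lexicographic product of $n$ copies of $\mathbb{R}_+$ (usual operations and order). A positive halo $A$ is archimedean if $A$ is not reduced to $\{0,1\}$ and for all $x>y>0$ there is $m\in\mathbb{N}$ with $my>x$. A halo $R$ has tempered growth if for every non-zero $P\in\mathbb{N}[X]$ and $x\in R$, ($x^m\le P(m)$ for all $m\in\mathbb{N}$) implies $x\le1$, natural numbers being interpreted as sums of $1$. *)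

From Stdlib Require Import Reals List.
Import ListNotations.
Open Scope R_scope.

(** Generic data of a (candidate) halo: a carrier type with a membership
    predicate (the actual underlying set), 0, 1, +, *, and a partial order <=. *)
Record halo_data := HaloData {
  car : Type;
  hmem : car -> Prop;
  hzero : car;
  hone : car;
  hadd : car -> car -> car;
  hmul : car -> car -> car;
  hle : car -> car -> Prop
}.

Definition hlt (H : halo_data) (x y : car H) : Prop := hle H x y /\ x <> y.

Definition hnat (H : halo_data) (m : nat) : car H := Nat.iter m (hadd H (hone H)) (hzero H).

Definition hnsmul (H : halo_data) (m : nat) (y : car H) : car H := Nat.iter m (hadd H y) (hzero H).

Definition hpow (H : halo_data) (x : car H) (m : nat) : car H := Nat.iter m (hmul H x) (hone H).

Definition positive_halo (H : halo_data) : Prop := hlt H (hzero H) (hone H).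

Definition archimedean (H : halo_data) : Prop :=
  positive_halo H /\
  (exists z, hmem H z /\ z <> hzero H /\ z <> hone H) /\
  (forall x y, hmem H x -> hmem H y -> hlt H y x -> hlt H (hzero H) y ->
     exists m : nat, hlt H x (hnsmul H m y)).

(** Polynomials in N[X] as coefficient lists (constant term first). *)
Definition natpoly := list nat.
Definition natpoly_nonzero (P : natpoly) : Prop := exists c, In c P /\ c <> 0%nat.
Definition natpoly_eval (P : natpoly) (m : nat) : nat :=
  fold_right (fun c acc => (c + m * acc)%nat) 0%nat P.

Definition tempered_growth (H : halo_data) : Prop :=
  forall (P : natpoly) (x : car H), natpoly_nonzero P -> hmem H x ->
    (forall m : nat, hle H (hpow H x m) (hnat H (natpoly_eval P m))) ->
    hle H x (hone H).

(** The lexicographic product R_+^[n].  Elements: None = 0, Some v with v a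
    list of n positive reals (the first coordinate is the most significant). *)
Fixpoint lex_le (a b : list R) : Prop :=
  match a, b with
  | [], [] => True
  | x :: a', y :: b' => x < y \/ (x = y /\ lex_le a' b')
  | _, _ => False
  end.

Definition lexR_mem (n : nat) (x : option (list R)) : Prop :=
  match x with
  | None => True
  | Some v => length v = n /\ Forall (fun t => 0 < t) v
  end.

Definition lexR_add (x y : option (list R)) : option (list R) :=
  match x, y with
  | None, _ => y
  | _, None => x
  | Some a, Some b => Some (map (fun p => fst p + snd p) (combine a b))
  end.

Definition lexR_mul (x y : option (list R)) : option (list R) :=
  match x, y with
  | Some a, Some b => Some (map (fun p => fst p * snd p) (combine a b))
  | _, _ => None
  end.

Definition lexR_le (x y : option (list R)) : Prop :=
  match x, y with
  | None, _ => True
  | Some _, None => False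
  | Some a, Some b => lex_le a b
  end.

Definition lexR (n : nat) : halo_data :=
  {| car := option (list R);
     hmem := lexR_mem n;
     hzero := None;
     hone := Some (repeat 1 n);
     hadd := lexR_add;
     hmul := lexR_mul;
     hle := lexR_le |}.

(* Archimedean: a nonzero element of R_+^[n] is outgrown by its integer multiples
   already in the most significant coordinate, where R_+ is archimedean.
   Not tempered: x = (1, 2, 1, ..., 1) exceeds 1, yet every power x^m keeps first
   coordinate 1 and therefore stays below the constant 2 = (2, ..., 2); the
   lexicographic order never looks at the coordinate that grows. *)
From Stdlib Require Import Reals List Lra Lia.
Import ListNotations.
Open Scope R_scope.

Lemma exists_nat_mul_gt (a b : R) : 0 < b -> exists m : nat, a < INR (S m) * b.
Proof.
  intro Hb.
  destruct (INR_unbounded (a / b)) as [m Hm].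
  exists m.
  assert (Ea : a = a / b * b) by (field; lra).
  rewrite S_INR. pose proof (pos_INR m). nra.
Qed.

Lemma lexR_mem_repeat (n : nat) (c : R) : 0 < c -> lexR_mem n (Some (repeat c n)).
Proof.
  intro Hc. split; [apply repeat_length |].
  apply Forall_forall. intros t Ht. apply repeat_spec in Ht. lra.
Qed.

Lemma lexR_lt_head (n : nat) (a b : R) (u v : list R) :
  a < b -> hlt (lexR n) (Some (a :: u)) (Some (b :: v)).
Proof.
  intro Hab. split; [now left |].
  intro E. injection E. lra.
Qed.

Lemma lexR_positive (n : nat) : positive_halo (lexR n).
Proof. split; [exact I | discriminate]. Qed.

Lemma map_add_combine_scale (c : R) (b : list R) :
  map (fun p => fst p + snd p) (combine b (map (fun t => c * t) b))
  = map (fun t => (c + 1) * t) b.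
Proof.
  induction b as [|t b IHb]; cbn; [reflexivity |].
  rewrite IHb. f_equal. ring.
Qed.

Lemma hnsmul_lexR (n m : nat) (b : list R) :
  hnsmul (lexR n) (S m) (Some b) = Some (map (fun t => INR (S m) * t) b).
Proof.
  induction m as [|m IHm].
  - cbn. f_equal. induction b as [|t b IHb]; cbn; [reflexivity |].
    rewrite <- IHb. f_equal. ring.
  - change (hnsmul (lexR n) (S (S m)) (Some b))
      with (lexR_add (Some b) (hnsmul (lexR n) (S m) (Some b))).
    rewrite IHm. cbn [lexR_add]. rewrite map_add_combine_scale, <- S_INR.
    reflexivity.
Qed.

Lemma map_scale_repeat_1 (c : R) (n : nat) : map (fun t => c * t) (repeat 1 n) = repeat c n.
Proof.
  induction n as [|n IHn]; cbn; [reflexivity |].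
  rewrite IHn. f_equal. ring.
Qed.

Lemma hnat_lexR (n m : nat) : hnat (lexR n) (S m) = Some (repeat (INR (S m)) n).
Proof.
  change (hnsmul (lexR n) (S m) (Some (repeat 1 n)) = Some (repeat (INR (S m)) n)).
  now rewrite hnsmul_lexR, map_scale_repeat_1.
Qed.

Lemma hpow_lexR_head (n : nat) (a : R) (v : list R) (m : nat) :
  exists l, hpow (lexR (S n)) (Some (a :: v)) m = Some (a ^ m :: l).
Proof.
  induction m as [|m [l Hl]].
  - exists (repeat 1 n). reflexivity.
  - exists (map (fun p => fst p * snd p) (combine v l)).
    change (lexR_mul (Some (a :: v)) (hpow (lexR (S n)) (Some (a :: v)) m)
            = Some (a ^ S m :: map (fun p => fst p * snd p) (combine v l))).
    now rewrite Hl.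
Qed.

Lemma lexR_archimedean (n : nat) : (0 < n)%nat -> archimedean (lexR n).
Proof.
  intro Hn. split; [apply lexR_positive | split].
  - exists (Some (repeat 2 n)). split; [apply lexR_mem_repeat; lra |].
    split; [discriminate |].
    destruct n as [|n]; [inversion Hn |].
    intro E. injection E. lra.
  - intros [a|] [b|] Hx Hy Hyx [_ Hy0]; try contradiction; try now destruct Hyx.
    destruct Hx as [La _], Hy as [Lb Pb].
    destruct a as [|a0 a]; [simpl in La; lia |].
    destruct b as [|b0 b]; [simpl in Lb; lia |].
    inversion Pb as [|? ? Hb0 _]; subst.
    destruct (exists_nat_mul_gt a0 b0 Hb0) as [m Hm].
    exists (S m). rewrite hnsmul_lexR. now apply lexR_lt_head.
Qed.

Lemma lexR_not_tempered_growth (k : nat) : ~ tempered_growth (lexR (S (S k))).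
Proof.
  set (x := Some (1 :: 2 :: repeat 1 k) : car (lexR (S (S k)))).
  intro Htemp.
  assert (Hx1 : hle (lexR (S (S k))) x (hone (lexR (S (S k))))).
  { apply (Htemp [2%nat]).
    - exists 2%nat. split; [now left | discriminate].
    - split; [simpl; now rewrite repeat_length |].
      repeat constructor; try lra.
      apply Forall_forall. intros t Ht. apply repeat_spec in Ht. lra.
    - intro m. destruct (hpow_lexR_head (S k) 1 (2 :: repeat 1 k) m) as [l Hl].
      unfold x. rewrite Hl. simpl natpoly_eval. rewrite Nat.mul_0_r, hnat_lexR.
      left. rewrite pow1. simpl. lra. }
  simpl in Hx1. lra.
Qed.

Theorem lemma1p33 (n : nat) (hn : (1 < n)%nat) :
  archimedean (lexR n) /\ ~ tempered_growth (lexR n).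
Proof.
  split.
  - apply lexR_archimedean. lia.
  - destruct n as [|[|k]]; try lia.
    apply lexR_not_tempered_growth.
Qed.
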